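(* Let $Y$ be a real normed space. (i) Let $A\neq Y$ be a nonempty closed convex cone of $Y$ (equivalently $A^*\neq\{0\}$) and $e\in Y$. Then $e\in\operatorname{int}(A)$ if and only if $\inf\{y^*(e):y^*\in S_{Y^*}\cap A^*\}>0$. Consequently, $\operatorname{int}(A)\neq\emptyset$ if and only if either $A=Y$ (equivalently $A^*=\{0\}$) or $0\notin\overline{\operatorname{conv}}^{w^*}(S_{Y^*}\cap A^* )$. (ii) Let $K$ be a nonempty closed convex subset of $Y$. Then $\operatorname{int}(\mathcal{R}_K)\neq\emptyset$ if and only if either $K=Y$ or $0\notin\overline{\operatorname{conv}}^{w^*}(S_{Y^*}\cap(-\operatorname{bar}(K)))$.
   Context: $Y^*$ is the dual of $Y$, $S_{Y^*}$ its unit sphere, $\overline{\operatorname{conv}}^{w^*}$ the weak-star closed convex hull. $A^*:=\{y^*\in Y^*:y^*(y)\ge0\ \forall y\in A\}$. $\operatorname{bar}(K):=\{y^*\in Y^*:\sup_{y\in K}y^*(y)<+\infty\}$; $\mathcal{R}_K:=\{v\in Y:x+\lambda v\in K\ \forall\lambda>0,\forall x\in K\}$. *)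

From HB Require Import structures.
From mathcomp Require Import all_boot all_order all_algebra.
From mathcomp Require Import all_classical all_reals all_analysis.
Set Implicit Arguments. Unset Strict Implicit. Unset Printing Implicit Defensive.
Import Order.TTheory GRing.Theory Num.Theory.
Import numFieldNormedType.Exports.
Local Open Scope classical_set_scope.
Local Open Scope ring_scope.

Section Dual.
Variables (R : realType) (Y : normedModType R).

Definition is_dual (f : Y -> R) : Prop :=
  (forall (a : R) (x y : Y), f (a *: x + y) = a * f x + f y) /\ continuous f.

Definition dual_norm (f : Y -> R) : R :=
  sup [set `|f y| | y in [set y : Y | `|y| <= 1]].

Definition dual_sphere : set (Y -> R) :=
  [set f | is_dual f /\ dual_norm f = 1].

Definition dual_cone (A : set Y) : set (Y -> R) :=
  [set f | is_dual f /\ forall y, A y -> 0 <= f y].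

Definition barrier (K : set Y) : set (Y -> R) :=
  [set f | is_dual f /\ exists M : R, forall y, K y -> f y <= M].

Definition dual_opp (C : set (Y -> R)) : set (Y -> R) :=
  [set f | C (fun y => - f y)].

Definition recession_cone (K : set Y) : set Y :=
  [set v | forall x, K x -> forall l : R, 0 < l -> K (x + l *: v)].

Definition convex_set_Y (A : set Y) : Prop :=
  forall x y (t : R), A x -> A y -> 0 <= t <= 1 -> A (t *: x + (1 - t) *: y).

Definition cone (A : set Y) : Prop :=
  forall (t : R) x, 0 <= t -> A x -> A (t *: x).

Definition convex_dual (C : set (Y -> R)) : Prop :=
  forall f g (t : R), C f -> C g -> 0 <= t <= 1 ->
    C (fun y => t * f y + (1 - t) * g y).

(* weak-star closedness of a subset of the dual: its complement in Y^* is open for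
   the weak-star topology, whose basic neighbourhoods of f are
   { g in the dual: |g y - f y| < eps for all y in a finite set s }. *)
Definition wstar_closed (C : set (Y -> R)) : Prop :=
  forall f, is_dual f -> ~ C f ->
    exists (s : seq Y) (eps : R), 0 < eps /\
      forall g, is_dual g -> (forall y, y \in s -> `|g y - f y| < eps) -> ~ C g.

Definition wstar_closed_conv (S : set (Y -> R)) : set (Y -> R) :=
  [set f | is_dual f /\
     forall C, S `<=` C -> convex_dual C -> wstar_closed C -> C f].

End Dual.
Arguments dual_sphere : clear implicits.

(* Everything rests on separating a point from a nonempty closed convex set by
   a functional of norm one.  This is Hahn-Banach in the form "a sublinear
   functional that is minimal (Zorn) is linear", applied to the gauge
   [y |-> inf_{s >= 0, c in C} |y - s (x - c)| - s r].
   (i) If [B(e, r)] lies in [A], every [f] in [S_{Y^*} \cap A^*] has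
   [f e >= r / 2]; if [y] is outside [A], separating [y] from the cone [A]
   gives such an [f] with [f y < 0], hence [f e <= |e - y|].
   A half-space [{f | f e >= rho}] is weak-star closed and convex, so
   [rho > 0] keeps [0] out of the hull.  Conversely a weak-star neighbourhood
   of [0] disjoint from a convex [C] is cut out by finitely many points
   [y_1, ..., y_n]; separating the image of [C] in [R^n] from [0] yields
   [e = sum_i a_i y_i] with [f e >= eps] on [C].
   (ii) Functionals of [-bar(K)] are nonnegative on [R_K], and if [x + l v]
   leaves [K] for some [x] in [K], the functional separating it lies in
   [-bar(K)] and is negative at [v]; so (i) goes through with [R_K] for [A]. *)

From HB Require Import structures.
From mathcomp Require Import all_boot all_order all_algebra.
From mathcomp Require Import all_classical all_reals all_analysis.
From mathcomp Require Import lra ring.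
Set Implicit Arguments. Unset Strict Implicit. Unset Printing Implicit Defensive.
Import Order.TTheory GRing.Theory Num.Theory.
Import numFieldNormedType.Exports.
Local Open Scope classical_set_scope.
Local Open Scope ring_scope.

Section Infimum.
Variable R : realType.

Lemma has_inf_of_inf_gt0 (S : set R) : 0 < inf S -> has_inf S.
Proof. by move=> inf_gt0; apply/not_notP => noinf; move: inf_gt0; rewrite inf_out // ltxx. Qed.

Definition iinf (I : Type) (D : set I) (f : I -> R) := inf [set f i | i in D].

Lemma iinf_le I (D : set I) f (m : R) i :
  (forall j, D j -> m <= f j) -> D i -> iinf D f <= f i.
Proof.
move=> hm Di; apply: ge_inf; last by exists i.
by exists m => _ [j Dj <-]; exact: hm.
Qed.

Lemma le_iinf I (D : set I) f (m : R) :
  D !=set0 -> (forall j, D j -> m <= f j) -> m <= iinf D f.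
Proof.
move=> [i Di] hm; apply: lb_le_inf; first by exists (f i), i.
by move=> _ [j Dj <-]; exact: hm.
Qed.

Lemma le_iinfD I J (D1 : set I) (D2 : set J) f1 f2 (m1 m2 z : R) :
  D1 !=set0 -> D2 !=set0 -> (forall i, D1 i -> m1 <= f1 i) ->
  (forall j, D2 j -> m2 <= f2 j) ->
  (forall i j, D1 i -> D2 j -> z <= f1 i + f2 j) -> z <= iinf D1 f1 + iinf D2 f2.
Proof.
move=> D1n D2n b1 b2 h.
suff : z - iinf D1 f1 <= iinf D2 f2 by lra.
apply: le_iinf => // j D2j.
suff : z - f2 j <= iinf D1 f1 by lra.
apply: le_iinf => // i D1i.
have := h i j D1i D2j; lra.
Qed.

End Infimum.

Section LinearFunctional.
Variables (R : realType) (V : lmodType R).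

Definition is_linear (F : V -> R) := forall a x y, F (a *: x + y) = a * F x + F y.

Variable F : V -> R.
Hypothesis linF : is_linear F.

Lemma is_linear0 : F 0 = 0.
Proof. have := linF (-1) 0 0; rewrite scaler0 add0r mulN1r; lra. Qed.

Lemma is_linearD x y : F (x + y) = F x + F y.
Proof. by have := linF 1 x y; rewrite scale1r mul1r. Qed.

Lemma is_linearZ a x : F (a *: x) = a * F x.
Proof. by have := linF a x 0; rewrite addr0 is_linear0 addr0. Qed.

Lemma is_linearN x : F (- x) = - F x.
Proof. by rewrite -scaleN1r is_linearZ mulN1r. Qed.

Lemma is_linearB x y : F (x - y) = F x - F y.
Proof. by rewrite is_linearD is_linearN. Qed.

End LinearFunctional.

Section Sublinear.
Variables (R : realType) (V : lmodType R).

Definition sublinear (q : V -> R) := (forall x y, q (x + y) <= q x + q y) /\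
  (forall (l : R) x, 0 <= l -> q (l *: x) = l * q x).

Lemma sublinear0 q : sublinear q -> q 0 = 0.
Proof. by case=> _ hom; rewrite -(scale0r (0 : V)) hom // mul0r. Qed.

Lemma sublinear_geN q x : sublinear q -> - q (- x) <= q x.
Proof. by move=> sq; have := sq.1 x (- x); rewrite subrr sublinear0 //; lra. Qed.

Lemma pos_homogeneous_of_le (f : V -> R) : f 0 = 0 ->
  (forall l x, 0 < l -> l * f x <= f (l *: x)) ->
  forall l x, 0 <= l -> f (l *: x) = l * f x.
Proof.
move=> f0 hle l x; rewrite le_eqVlt => /orP[/eqP<-|l0].
  by rewrite scale0r f0 mul0r.
apply: le_anti; rewrite hle // andbT.
have := ler_wpM2l (ltW l0) (hle l^-1 (l *: x) ltac:(by rewrite invr_gt0)).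
by rewrite scalerA mulVf ?gt_eqF // scale1r mulrA mulfV ?gt_eqF // mul1r.
Qed.

Lemma sublinear_iinf_chain (I : Type) (D : set I) (q : I -> V -> R) (P : V -> R) :
  D !=set0 -> (forall i, D i -> sublinear (q i) /\ forall x, q i x <= P x) ->
  (forall i j, D i -> D j -> (forall x, q i x <= q j x) \/ (forall x, q j x <= q i x)) ->
  sublinear (fun x => iinf D (q ^~ x)).
Proof.
move=> Dn hq chain.
have lbq x i : D i -> - P (- x) <= q i x.
  move=> Di; apply: le_trans (sublinear_geN x (hq i Di).1).
  by rewrite lerN2; exact: (hq i Di).2.
have iinf_le_q x i : D i -> iinf D (q ^~ x) <= q i x by exact: iinf_le (lbq x).
split.
  move=> x y; apply: (le_iinfD Dn Dn (lbq x) (lbq y)) => i j Di Dj.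
  have [qij|qji] := chain i j Di Dj.
  - apply: le_trans (iinf_le_q _ i Di) _.
    have := (hq i Di).1.1 x y; have := qij y; lra.
  - apply: le_trans (iinf_le_q _ j Dj) _.
    have := (hq j Dj).1.1 x y; have := qji x; lra.
apply: pos_homogeneous_of_le.
  apply: le_anti; apply/andP; split.
    by case: Dn => i Di; have := iinf_le_q 0 i Di; rewrite sublinear0 //; case: (hq i Di).
  by apply: le_iinf => // i Di; rewrite sublinear0 //; case: (hq i Di).
move=> l x l0; apply: le_iinf => // i Di.
have := ler_wpM2l (ltW l0) (iinf_le_q x i Di).
by rewrite -(hq i Di).1.2 //; exact: ltW.
Qed.

Section Shift.
Variables (q : V -> R) (y : V).
Hypothesis sq : sublinear q.

Let D := [set t : R | 0 <= t].

Definition qshift x := iinf D (fun t => q (x + t *: y) - t * q y).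

Let Dn : D !=set0. Proof. by exists 0; rewrite /D /= lexx. Qed.

Let qshift_lb x t : D t -> - q (- x) <= q (x + t *: y) - t * q y.
Proof.
move=> Dt; have := sq.1 (x + t *: y) (- x).
by rewrite (addrC x) addrK sq.2 //; lra.
Qed.

Lemma qshift_le x : qshift x <= q x.
Proof.
have := iinf_le (@qshift_lb x) (lexx 0).
by rewrite scale0r addr0 mul0r subr0.
Qed.

Lemma qshift_le_sub x : qshift x <= q (x + y) - q y.
Proof. by have := iinf_le (@qshift_lb x) ler01; rewrite scale1r mul1r. Qed.

Lemma qshift_sublinear : sublinear qshift.
Proof.
split.
  move=> x1 x2; apply: (le_iinfD Dn Dn (@qshift_lb x1) (@qshift_lb x2)) => t1 t2 D1 D2.
  have D12 : D (t1 + t2) by rewrite /D /= addr_ge0.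
  apply: le_trans (iinf_le (@qshift_lb (x1 + x2)) D12) _.
  have := sq.1 (x1 + t1 *: y) (x2 + t2 *: y).
  by rewrite addrACA -scalerDl; lra.
apply: pos_homogeneous_of_le.
  apply: le_anti; apply/andP; split.
    by have := qshift_le 0; rewrite (sublinear0 sq).
  by apply: le_iinf => // t Dt; rewrite add0r sq.2 //; lra.
move=> l x l0; apply: le_iinf => // t Dt.
have Dtl : D (t / l) by rewrite /D /= divr_ge0 // ltW.
have := ler_wpM2l (ltW l0) (iinf_le (@qshift_lb x) Dtl).
have tlK : l * (t / l) = t by rewrite mulrCA mulfV ?gt_eqF // mulr1.
have -> : l *: x + t *: y = l *: (x + (t / l) *: y) by rewrite scalerDr scalerA tlK.
by rewrite sq.2 ?(ltW l0) // mulrBr mulrA tlK.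
Qed.

End Shift.

Lemma minimal_sublinear_linear q : sublinear q ->
  (forall p, sublinear p -> (forall x, p x <= q x) -> p = q) -> is_linear q.
Proof.
move=> sq qmin.
have qshiftE y : qshift q y = q by apply: qmin; [exact: qshift_sublinear|exact: qshift_le].
have qD x y : q (x + y) = q x + q y.
  by apply: le_anti; rewrite sq.1 /=; have := qshift_le_sub y sq x; rewrite qshiftE; lra.
have qN x : q (- x) = - q x by have := qD x (- x); rewrite subrr sublinear0 //; lra.
move=> a x y; rewrite qD; congr (_ + _).
have [a0|a0] := leP 0 a; first by rewrite sq.2.
rewrite -[a *: x]opprK -scaleNr qN sq.2 ?oppr_ge0 ?ltW //.
by rewrite mulNr opprK.
Qed.

Lemma exists_minimal_sublinear P : sublinear P -> exists q, [/\ sublinear q,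
  forall x, q x <= P x & forall p, sublinear p -> (forall x, p x <= q x) -> p = q].
Proof.
move=> sP.
pose T := {q : V -> R | sublinear q /\ forall x, q x <= P x}.
pose below (a b : T) := `[< forall x, sval b x <= sval a x >].
have [[q [sq qP]] qmax] : exists t : T, forall s : T, below t s -> s = t.
  apply: Zorn.
  - by move=> a; apply/asboolP => x.
  - move=> a b c /asboolP ab /asboolP bc; apply/asboolP => x.
    exact: le_trans (bc x) (ab x).
  - move=> [a ?] [b ?] /asboolP /= ab /asboolP /= ba; apply: eq_exist.
    by apply: funext => x; apply: le_anti; rewrite ab ba.
  move=> A Atot; have [An|An] := pselect (A !=set0); last first.
    by exists (exist _ P (conj sP (fun x => lexx (P x)))) => s As; exfalso; apply: An; exists s.
  have sm : sublinear (fun x => iinf A (fun a : T => sval a x)).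
    apply: (sublinear_iinf_chain (P := P)) => // [a _|a b Aa Ab].
      exact: proj2_sig a.
    by have [/asboolP|/asboolP] := Atot a b Aa Ab; [right|left].
  have lb x (b : T) : - P (- x) <= sval b x.
    apply: le_trans (sublinear_geN x (proj2_sig b).1).
    by rewrite lerN2 (proj2_sig b).2.
  have le_sval x a : A a -> iinf A (fun b : T => sval b x) <= sval a x.
    by apply: iinf_le => b _; exact: lb.
  have mP x : iinf A (fun a : T => sval a x) <= P x.
    by case: An => a Aa; apply: le_trans (le_sval x a Aa) ((proj2_sig a).2 x).
  exists (exist _ (fun x => iinf A (sval^~ x)) (conj sm mP) : T) => a Aa; apply/asboolP => x /=.
  exact: le_sval.
exists q; split => // p sp pq.
have pP x : p x <= P x by exact: le_trans (pq x) (qP x).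
by have /(congr1 sval) := qmax (exist _ p (conj sp pP)) (asboolT pq).
Qed.

Theorem hahn_banach_sublinear P : sublinear P ->
  exists2 F, is_linear F & forall x, F x <= P x.
Proof.
move=> /exists_minimal_sublinear[q [sq qP qmin]].
by exists q => //; exact: minimal_sublinear_linear.
Qed.

End Sublinear.

Section ConvexSeparation.
Variables (R : realType) (E : normedModType R).
Variables (C : set E) (x : E) (r : R).
Hypotheses (Cn : C !=set0) (convC : convex_set_Y C)
  (gapC : forall c, C c -> r <= `|x - c|).

Let D := [set p : R * E | 0 <= p.1 /\ C p.2].

(* Any linear minorant of this sublinear gauge is bounded by the norm and
   separates [x] from [C] by [r]. *)
Definition sep_gauge (y : E) := iinf D (fun p => `|y - p.1 *: (x - p.2)| - p.1 * r).

Let Dn : D !=set0. Proof. by case: Cn => c Cc; exists (0, c). Qed.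

Let sep_gauge_lb y p : D p -> - `|y| <= `|y - p.1 *: (x - p.2)| - p.1 * r.
Proof.
case: p => [s c] [/= s0 Cc].
have := ler_normD (s *: (x - c) - y) y; rewrite subrK distrC normrZ ger0_norm //.
by have := ler_wpM2l s0 (gapC Cc); lra.
Qed.

Let sep_gauge_le y p : D p -> sep_gauge y <= `|y - p.1 *: (x - p.2)| - p.1 * r.
Proof. exact: iinf_le (@sep_gauge_lb y). Qed.

Lemma sep_gauge_le_norm y : sep_gauge y <= `|y|.
Proof.
case: Cn => c Cc; apply: le_trans (@sep_gauge_le y (0, c) (conj (lexx 0) Cc)) _.
by rewrite /= scale0r subr0 mul0r subr0.
Qed.

Lemma sep_gauge_le_sub c : C c -> sep_gauge (x - c) <= - r.
Proof.
move=> Cc; have := @sep_gauge_le (x - c) (1, c) (conj ler01 Cc).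
by rewrite /= scale1r subrr normr0 mul1r sub0r.
Qed.

Lemma scale_convex_comb (s1 s2 : R) (c1 c2 : E) : 0 < s1 + s2 ->
  (s1 + s2) *: (x - ((s1 / (s1 + s2)) *: c1 + (1 - s1 / (s1 + s2)) *: c2)) =
  s1 *: (x - c1) + s2 *: (x - c2).
Proof.
move=> s12.
have e1 : (s1 + s2) * (s1 / (s1 + s2)) = s1 by rewrite mulrCA mulfV ?gt_eqF // mulr1.
have e2 : (s1 + s2) * (1 - s1 / (s1 + s2)) = s2 by rewrite mulrBr e1 mulr1; lra.
rewrite scalerBr scalerDr !scalerA e1 e2 scalerDl !scalerBr.
by rewrite opprD addrACA.
Qed.

Lemma sep_gauge_subadditive y1 y2 : sep_gauge (y1 + y2) <= sep_gauge y1 + sep_gauge y2.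
Proof.
apply: (le_iinfD Dn Dn (@sep_gauge_lb y1) (@sep_gauge_lb y2)).
move=> [s1 c1] [s2 c2] [/= s10 C1] [/= s20 C2].
have [s12|s12] := eqVneq (s1 + s2) 0.
  have [-> ->] : s1 = 0 /\ s2 = 0 by lra.
  apply: le_trans (@sep_gauge_le _ (0, c1) (conj (lexx 0) C1)) _.
  by rewrite /= !scale0r !mul0r !subr0 ler_normD.
have {}s12 : 0 < s1 + s2 by rewrite lt_def s12 addr_ge0.
set t := s1 / (s1 + s2).
have t01 : 0 <= t <= 1.
  by rewrite divr_ge0 ?ler_pdivrMr ?mul1r ?lerDl ?(ltW s12).
have Dp : D (s1 + s2, t *: c1 + (1 - t) *: c2) by split; [exact: ltW|exact: convC].
apply: le_trans (sep_gauge_le _ Dp) _; rewrite /= scale_convex_comb //.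
have -> : y1 + y2 - (s1 *: (x - c1) + s2 *: (x - c2)) =
  (y1 - s1 *: (x - c1)) + (y2 - s2 *: (x - c2)) by rewrite opprD addrACA.
by have := ler_normD (y1 - s1 *: (x - c1)) (y2 - s2 *: (x - c2)); lra.
Qed.

Lemma sep_gauge_sublinear : sublinear sep_gauge.
Proof.
split; first exact: sep_gauge_subadditive.
apply: pos_homogeneous_of_le.
  apply: le_anti; rewrite (le_trans (sep_gauge_le_norm 0)) ?normr0 //=.
  by have := le_iinf Dn (@sep_gauge_lb 0); rewrite normr0 oppr0.
move=> l y l0; apply: le_iinf => // [[s c]] [/= s0 Cc].
have Dp : D (s / l, c) by split => //=; rewrite divr_ge0 // ltW.
have := ler_wpM2l (ltW l0) (sep_gauge_le y Dp); rewrite /=.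
have slK : l * (s / l) = s by rewrite mulrCA mulfV ?gt_eqF // mulr1.
rewrite mulrBr mulrA slK.
suff -> : `|l *: y - s *: (x - c)| = l * `|y - (s / l) *: (x - c)| by [].
by rewrite -[in LHS]slK -[in LHS]scalerA -scalerBr normrZ gtr0_norm.
Qed.

Theorem convex_separation : exists F, [/\ is_linear F,
  forall u, `|F u| <= `|u| & forall c, C c -> F x + r <= F c].
Proof.
have [F linF FP] := hahn_banach_sublinear sep_gauge_sublinear.
have Fle u : F u <= `|u| by exact: le_trans (FP u) (sep_gauge_le_norm u).
exists F; split => // [u|c Cc].
  rewrite ler_norml Fle andbT.
  by have := Fle (- u); rewrite (is_linearN linF) normrN lerNl.
by have := le_trans (FP _) (sep_gauge_le_sub Cc); rewrite (is_linearB linF); lra.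
Qed.

End ConvexSeparation.

Section DualNorm.
Variables (R : realType) (Y : normedModType R).

Lemma is_dual_of_bound (F : Y -> R) (M : R) : is_linear F -> 0 < M ->
  (forall u, `|F u| <= M * `|u|) -> is_dual F.
Proof.
move=> linF M0 FM; split => // x; apply/(@cvgrPdist_lt _ _ _ (nbhs x)) => e e0.
near=> z; rewrite -(is_linearB linF) (le_lt_trans (FM _)) // -ltr_pdivlMl //.
by near: z; apply: cvgr_dist_lt => //; rewrite mulrC divr_gt0.
Unshelve. all: by end_near. Qed.

Definition dual_norm_set (f : Y -> R) := [set `|f y| | y in [set y : Y | `|y| <= 1]].

Lemma dual_norm_set_ubound (f : Y -> R) M : 0 <= M ->
  (forall u, `|f u| <= M * `|u|) -> has_ubound (dual_norm_set f).
Proof.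
move=> M0 fM; exists M => _ [y /= y1 <-].
by apply: le_trans (fM y) _; rewrite -[leRHS]mulr1 ler_wpM2l.
Qed.

Lemma dual_norm_set_neq0 (f : Y -> R) : dual_norm_set f !=set0.
Proof. by exists `|f 0|, 0 => //=; rewrite normr0. Qed.

Lemma le_dual_norm (f : Y -> R) M : is_linear f -> 0 <= M ->
  (forall u, `|f u| <= M * `|u|) -> forall u, `|f u| <= dual_norm f * `|u|.
Proof.
move=> linf M0 fM u; have [->|u0] := eqVneq u 0.
  by rewrite (is_linear0 linf) !normr0 mulr0.
have nu : 0 < `|u| by rewrite normr_gt0.
have : `|f (`|u|^-1 *: u)| <= dual_norm f.
  apply: ub_le_sup; first exact: dual_norm_set_ubound M0 fM.
  by exists (`|u|^-1 *: u) => //=; rewrite normrZ normrV ?unitfE ?gt_eqF // normr_id mulVf ?gt_eqF.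
rewrite (is_linearZ linf) normrM normrV ?unitfE ?gt_eqF // normr_id ler_pdivrMl //.
by rewrite mulrC.
Qed.

Lemma ge_of_ball_ge0 (f : Y -> R) (e : Y) (rho : R) : is_linear f ->
  dual_norm f = 1 -> 0 < rho ->
  (forall u, `|u| <= 1 -> 0 <= f (e + rho *: u)) -> rho <= f e.
Proof.
move=> linf f1 rho0 fge0.
suff : dual_norm f <= f e / rho by rewrite f1 ler_pdivlMr // mul1r.
apply: ge_sup; first exact: dual_norm_set_neq0.
move=> _ [y /= y1 <-]; rewrite ler_pdivlMr //.
have := fge0 y y1; have := fge0 (- y); rewrite normrN => /(_ y1).
rewrite !(is_linearD linf) !(is_linearZ linf) (is_linearN linf).
by have [fy0|fy0] := leP 0 (f y); [rewrite ger0_norm|rewrite ltr0_norm]; nra.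
Qed.

Lemma dual_sphere_ge_of_ball (f : Y -> R) e r :
  dual_sphere R Y f -> 0 < r -> (forall y, `|e - y| < r -> 0 <= f y) -> r / 2 <= f e.
Proof.
move=> [[linf _] f1] r0 fge0; have r2 : 0 < r / 2 by rewrite divr_gt0.
apply: ge_of_ball_ge0 => // u u1; apply: fge0.
rewrite opprD addrA subrr add0r normrN normrZ gtr0_norm //.
by have := ler_wpM2l (ltW r2) u1; lra.
Qed.

Lemma dual_sphere_normalize (F : Y -> R) x : is_linear F ->
  (forall u, `|F u| <= `|u|) -> F x != 0 ->
  exists2 d : R, 0 < d &
    dual_sphere R Y (fun y => d^-1 * F y) /\ forall u, `|d^-1 * F u| <= `|u|.
Proof.
move=> linF F1 Fx.
have Fd := le_dual_norm linF ler01 (fun u => ltac:(by rewrite mul1r)).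
set d := dual_norm F in Fd *.
have d0 : 0 < d.
  have : 0 < d * `|x| by apply: lt_le_trans (Fd x); rewrite normr_gt0.
  by rewrite pmulr_lgt0 // normr_gt0; apply: contraNneq Fx => ->; rewrite (is_linear0 linF).
have linG : is_linear (fun y => d^-1 * F y) by move=> a u v /=; rewrite linF mulrDr mulrCA.
have G1 u : `|d^-1 * F u| <= `|u|.
  by rewrite normrM normrV ?unitfE ?gt_eqF // gtr0_norm // ler_pdivrMl.
have G1' u : `|d^-1 * F u| <= 1 * `|u| by rewrite mul1r.
exists d => //; split => //; split; first exact: is_dual_of_bound linG ltr01 G1'.
apply: le_anti; apply/andP; split.
  apply: ge_sup; first exact: dual_norm_set_neq0.
  by move=> _ [y /= y1 <-]; apply: le_trans (G1 y) y1.
rewrite -(@ler_pM2l _ d) // mulr1; apply: ge_sup; first exact: dual_norm_set_neq0.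
move=> _ [y /= y1 <-].
have : `|d^-1 * F y| <= dual_norm (fun y => d^-1 * F y).
  by apply: ub_le_sup; [exact: dual_norm_set_ubound ler01 G1'|exists y].
by rewrite normrM normrV ?unitfE ?gt_eqF // gtr0_norm // ler_pdivrMl.
Qed.

Lemma closed_gap (K : set Y) x : closed K -> ~ K x ->
  exists2 r : R, 0 < r & forall c, K c -> r <= `|x - c|.
Proof.
move=> clK Kx.
have /nbhs_normP[r r0 rK] : nbhs x (~` K).
  by apply: open_nbhs_nbhs; split => //; exact: closed_openC.
by exists r => // c Kc; rewrite leNgt; apply/negP => /rK.
Qed.

Theorem closed_convex_separation (K : set Y) x : K !=set0 -> closed K ->
  convex_set_Y K -> ~ K x ->
  exists g, [/\ dual_sphere R Y g, forall u, `|g u| <= `|u| &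
    exists2 delta : R, 0 < delta & forall c, K c -> g x + delta <= g c].
Proof.
move=> [c0 Kc0] clK convK Kx.
have [r r0 rK] := closed_gap clK Kx.
have [F [linF F1 Fsep]] := convex_separation (ex_intro _ c0 Kc0) convK rK.
have Fx : F (c0 - x) != 0.
  by rewrite (is_linearB linF) subr_eq0; apply: contraPneq (Fsep c0 Kc0) => ->; lra.
have [d d0 [gS g1]] := dual_sphere_normalize linF F1 Fx.
exists (fun y => d^-1 * F y); split => //.
exists (d^-1 * r) => [|c Kc]; first by rewrite mulr_gt0 // invr_gt0.
by rewrite -mulrDr ler_wpM2l ?invr_ge0 ?(ltW d0) ?Fsep.
Qed.

End DualNorm.

Section WeakStarHull.
Variables (R : realType) (Y : normedModType R).

Lemma is_dual0 : is_dual (fun _ : Y => 0 : R).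
Proof. by split=> [*|]; [rewrite mulr0 addr0|exact: cst_continuous]. Qed.

Lemma is_dual_comb (f g : Y -> R) (t : R) : is_dual f -> is_dual g ->
  is_dual (fun y => t * f y + (1 - t) * g y).
Proof.
move=> [linf cf] [ling cg]; split => [a x y|x]; first by rewrite linf ling; ring.
apply: (@continuousD _ _ _ (fun y => t * f y) (fun y => (1 - t) * g y)).
  by apply: (@continuousM _ _ (fun _ => t) f); [exact: cst_continuous|exact: cf].
by apply: (@continuousM _ _ (fun _ => 1 - t) g); [exact: cst_continuous|exact: cg].
Qed.

(* Evaluation at the points of [s] maps [C] to a convex subset of [R^n] at
   sup-distance [eps] from [0]; a functional [F] separating it from [0] gives
   [e = \sum_i F 'e_i *: s_i]. *)
Lemma finite_separation (C : set (Y -> R)) (s : seq Y) (eps : R) :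
  (exists g, C g /\ is_dual g) -> convex_dual C ->
  (forall g, is_dual g -> (forall y, y \in s -> `|g y - 0| < eps) -> ~ C g) ->
  exists e : Y, forall g, C g -> is_dual g -> eps <= g e.
Proof.
move=> [g0 [Cg0 dg0]] convC farC.
pose n := size s.
pose ev (g : Y -> R) : 'rV[R]_n := \row_(i < n) g (nth 0 s i).
pose W := [set ev g | g in [set g | C g /\ is_dual g]].
have W0 : W !=set0 by exists (ev g0), g0.
have convW : convex_set_Y W.
  move=> _ _ t [g1 [C1 d1] <-] [g2 [C2 d2] <-] t01.
  exists (fun y => t * g1 y + (1 - t) * g2 y); last by apply/rowP => i; rewrite !mxE.
  by split; [exact: convC|exact: is_dual_comb].
have farW w : W w -> eps <= `|0 - w|.
  move=> [g [Cg dg] <-]; rewrite leNgt; apply/negP => evg.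
  apply: (farC g dg) => // y ys; rewrite subr0.
  have ys' : (index y s < n)%N by rewrite index_mem.
  have := le_bigmax 0 (fun ij : 'I_1 * 'I_n => `|ev g ij.1 ij.2|) (0, Ordinal ys').
  rewrite /= mxE nth_index // => /le_lt_trans; apply.
  by move: evg; rewrite sub0r normrN /= [`|_|]mx_normrE.
have [F [linF _ Fsep]] := convex_separation W0 convW farW.
exists (\sum_(i < n) F 'e_i *: nth 0 s i) => g Cg dg.
have := Fsep (ev g) (ex_intro2 _ _ g (conj Cg dg) erefl).
rewrite (is_linear0 linF) add0r (row_sum_delta (ev g)).
rewrite (big_morph F (is_linearD linF) (is_linear0 linF)).
rewrite (big_morph g (is_linearD dg.1) (is_linear0 dg.1)).
congr (_ <= _); apply: eq_bigr => i _.
by rewrite (is_linearZ linF) (is_linearZ dg.1) mxE mulrC.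
Qed.

Lemma not_wstar_closed_conv0 (X : set (Y -> R)) (e : Y) (rho : R) : 0 < rho ->
  (forall f, X f -> rho <= f e) -> ~ wstar_closed_conv X (fun _ : Y => 0 : R).
Proof.
move=> rho0 Xe [_ /(_ [set g | rho <= g e] Xe)] /= hull.
suff : rho <= 0 by lra.
apply: hull => [f g t /= fe ge /andP[t0 t1]|f _ /= fe]; first by nra.
exists [:: e], (rho - f e); split => [|g _ /(_ e (mem_head _ _))]; first lra.
by rewrite ltr_norml => /andP[_]; lra.
Qed.

Lemma not_wstar_closed_conv0_separation (X : set (Y -> R)) :
  (forall f, X f -> is_dual f) -> X !=set0 ->
  ~ wstar_closed_conv X (fun _ : Y => 0 : R) ->
  exists e : Y, exists2 eps : R, 0 < eps & forall f, X f -> eps <= f e.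
Proof.
move=> Xdual [g0 Xg0] notin.
have /existsNP[C /not_implyP[XC /not_implyP[convC /not_implyP[closC C0]]]] :
    ~ (forall C, X `<=` C -> convex_dual C -> wstar_closed C -> C (fun _ : Y => 0 : R)).
  by move=> hull; apply: notin; split => //; exact: is_dual0.
have [s [eps [eps0 farC]]] := closC _ is_dual0 C0.
have [e Ce] := finite_separation (ex_intro _ g0 (conj (XC _ Xg0) (Xdual _ Xg0))) convC farC.
by exists e, eps => // f Xf; apply: Ce; [exact: XC|exact: Xdual].
Qed.

End WeakStarHull.

Section DualCone.
Variables (R : realType) (Y : normedModType R) (A : set Y).
Hypotheses (An : A !=set0) (clA : closed A) (convA : convex_set_Y A) (coneA : cone A).

Let X := dual_sphere R Y `&` dual_cone A.

Let A0 : A 0.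
Proof. by case: An => a Aa; rewrite -(scale0r a); apply: coneA. Qed.

Lemma cone_separation x : ~ A x ->
  exists g, [/\ X g, g x < 0 & forall u, `|g u| <= `|u|].
Proof.
move=> Ax; have [g [gS g1 [delta delta0 gsep]]] := closed_convex_separation An clA convA Ax.
have linf : is_linear g by case: gS => -[].
have gx : g x < 0 by have := gsep 0 A0; rewrite (is_linear0 linf); lra.
exists g; split => //; split => //; split => [|c Ac]; first by case: gS.
rewrite leNgt; apply/negP => gc.
(* [g c < 0] would make [g] unbounded below on the cone [A] *)
pose t := (`|g x| + delta + 1) / (- g c).
have t0 : 0 < t by rewrite divr_gt0 ?oppr_gt0 //; have := normr_ge0 (g x); lra.
have := gsep _ (coneA (ltW t0) Ac); rewrite (is_linearZ linf).
have -> : t * g c = - (`|g x| + delta + 1) by rewrite /t; field; rewrite ?oppr_eq0 lt_eqF.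
by have := ler_norm (- g x); rewrite normrN; lra.
Qed.

Lemma dual_sphere_cone_neq0 : A <> setT -> X !=set0.
Proof.
by move=> /eqP/setTPn[x /cone_separation[g [Xg _ _]]]; exists g.
Qed.

Lemma cone_neqT_dual_cone : A <> setT <-> dual_cone A <> [set (fun _ : Y => 0 : R)].
Proof.
split => [/eqP/setTPn[x /cone_separation[g [[_ gA] gx _]]] Aneq0|neq0 AT].
  by move: gA; rewrite Aneq0 => /= gE; rewrite gE ltxx in gx.
apply: neq0; apply/seteqP; split => [f [[linf _] fA]|f /= ->]; last by split => //; exact: is_dual0.
apply/funext => y /=; have := fA y; have := fA (- y).
by rewrite AT (is_linearN linf) => /(_ I) ? /(_ I) ?; lra.
Qed.

Lemma interior_cone_inf_gt0 : A <> setT -> forall e,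
  (interior A) e <-> 0 < inf [set f e | f in X].
Proof.
move=> AT e; have X0 := dual_sphere_cone_neq0 AT; split.
  move=> /nbhs_normP[r r0 rA].
  apply: (@lt_le_trans _ _ (r / 2)); first by rewrite divr_gt0.
  apply: lb_le_inf; first by case: X0 => f Xf; exists (f e), f.
  move=> _ [f [fS [_ fA]] <-]; apply: dual_sphere_ge_of_ball => // y ey.
  exact/fA/rA.
move=> inf_gt0; have infX := has_inf_of_inf_gt0 inf_gt0.
apply/nbhs_normP; exists (inf [set f e | f in X]) => // y /= ey.
apply/not_notP => /cone_separation[g [Xg gy g1]].
have linf : is_linear g by case: Xg => -[[]].
have : inf [set f e | f in X] <= g e by apply: (ge_inf infX.2); exists g.
have := g1 (e - y); rewrite (is_linearB linf).
by have := ler_norm (g e - g y); lra.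
Qed.

Lemma interior_cone_neq0 : interior A !=set0 <->
  (A = setT \/ ~ wstar_closed_conv X (fun _ : Y => 0 : R)).
Proof.
have [->|AT] := pselect (A = setT); first by rewrite interiorT; split => _; [left|exists 0].
split => [[e /(interior_cone_inf_gt0 AT) inf_gt0]|[//|notin]].
  right; have infX := has_inf_of_inf_gt0 inf_gt0.
  by apply: (not_wstar_closed_conv0 inf_gt0) => f Xf; apply: (ge_inf infX.2); exists f.
have X0 := dual_sphere_cone_neq0 AT.
have [e [eps eps0 Xe]] := not_wstar_closed_conv0_separation (fun f (Xf : X f) => Xf.1.1) X0 notin.
exists e; apply/(interior_cone_inf_gt0 AT); apply: lt_le_trans eps0 _.
apply: lb_le_inf => [|_ [f Xf <-]]; last exact: Xe.
by case: X0 => f Xf; exists (f e), f.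
Qed.

End DualCone.

Section RecessionCone.
Variables (R : realType) (Y : normedModType R) (K : set Y).
Hypotheses (Kn : K !=set0) (clK : closed K) (convK : convex_set_Y K).

Let X := dual_sphere R Y `&` dual_opp (barrier K).

Lemma recession_cone_ge0 f v : X f -> recession_cone K v -> 0 <= f v.
Proof.
move=> [[[linf _] _] [_ [M KM]]] Kv; case: Kn => x Kx.
rewrite leNgt; apply/negP => fv.
pose l := (`|M| + `|f x| + 1) / (- f v).
have l0 : 0 < l.
  by rewrite divr_gt0 ?oppr_gt0 //; have := normr_ge0 M; have := normr_ge0 (f x); lra.
have := KM _ (Kv x Kx l l0); rewrite (is_linearD linf) (is_linearZ linf).
have -> : l * f v = - (`|M| + `|f x| + 1) by rewrite /l; field; rewrite ?oppr_eq0 lt_eqF.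
by have := ler_norm M; have := ler_norm (f x); lra.
Qed.

Lemma barrier_separation y : ~ K y -> exists g, [/\ X g, forall u, `|g u| <= `|u| &
  exists2 delta : R, 0 < delta & forall c, K c -> g y + delta <= g c].
Proof.
move=> Ky; have [g [gS g1 [delta delta0 gsep]]] := closed_convex_separation Kn clK convK Ky.
exists g; split => //; last by exists delta.
have [linf cf] := gS.1; split => //; split; last first.
  by exists (- g y - delta) => c Kc; have := gsep c Kc; lra.
split => [a u v /=|]; first by rewrite linf; ring.
by move=> u; apply: continuousN; exact: cf.
Qed.

Lemma interior_recession_cone_neq0 : interior (recession_cone K) !=set0 <->
  (K = setT \/ ~ wstar_closed_conv X (fun _ : Y => 0 : R)).
Proof.
have [->|KT] := pselect (K = setT).
  have -> : recession_cone [set: Y] = setT by apply/seteqP; split.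
  by rewrite interiorT; split => _; [left|exists 0].
split => [[e /nbhs_normP[r r0 rRK]]|[//|notin]].
  right; apply: (@not_wstar_closed_conv0 _ _ _ e (r / 2)); first by rewrite divr_gt0.
  move=> f Xf; apply: dual_sphere_ge_of_ball Xf.1 r0 _ => v ev.
  exact/(recession_cone_ge0 Xf)/rRK.
have /setTPn[x0 /barrier_separation[g0 [Xg0 _ _]]] : K != setT by exact/eqP.
have [e [eps eps0 Xe]] := not_wstar_closed_conv0_separation
  (fun f (Xf : X f) => Xf.1.1) (ex_intro _ g0 Xg0) notin.
exists e; apply/nbhs_normP; exists eps => // v /= ev x Kx l l0.
apply/not_notP => /barrier_separation[g [Xg g1 [delta delta0 gsep]]].
have linf : is_linear g by case: Xg => -[[]].
have gxlv := gsep x Kx; rewrite (is_linearD linf) (is_linearZ linf) in gxlv.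
have gev := g1 (e - v); rewrite (is_linearB linf) in gev.
have gv : 0 < g v by have := Xe g Xg; have := ler_norm (g e - g v); lra.
have : 0 < l * g v by rewrite mulr_gt0.
lra.
Qed.

End RecessionCone.

Theorem lemma3p6 (R : realType) (Y : normedModType R) :
  (* (i) *)
  (forall A : set Y,
     A !=set0 -> closed A -> convex_set_Y A -> cone A ->
     (A <> setT <-> dual_cone A <> [set (fun _ : Y => 0 : R)]) /\
     (A <> setT -> forall e : Y,
        (interior A) e <->
        0 < inf [set f e | f in dual_sphere R Y `&` dual_cone A]) /\
     (interior A !=set0 <->
        (A = setT \/
         ~ wstar_closed_conv (dual_sphere R Y `&` dual_cone A) (fun _ : Y => 0 : R))))
  /\
  (* (ii) *)
  (forall K : set Y,
     K !=set0 -> closed K -> convex_set_Y K ->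
     (interior (recession_cone K) !=set0 <->
        (K = setT \/
         ~ wstar_closed_conv (dual_sphere R Y `&` dual_opp (barrier K))
             (fun _ : Y => 0 : R)))).
Proof.
split=> [A An clA convA coneA|K Kn clK convK].
  split; first exact: cone_neqT_dual_cone.
  split; [exact: interior_cone_inf_gt0|exact: interior_cone_neq0].
exact: interior_recession_cone_neq0.
Qed.
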